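(* (1) The set $\{\mathbb{E}_\mathbf{I}\mid\mathbf{I}\in\mathcal{LP}_n\}$ is a complete set (i.e. summing to $1$) of central pairwise orthogonal idempotents of $bH_n(q)$. (2) For all $\mathbf{I},\mathbf{J}\in\mathcal{LP}_n$ one has $\mathbb{E}_\mathbf{I}\operatorname{E}_\mathbf{J}=\mathbb{E}_\mathbf{I}$ if $\mathbf{J}\preceq\mathbf{I}$, and $\mathbb{E}_\mathbf{I}\operatorname{E}_\mathbf{J}=0$ otherwise.
   Context: $\mathbb{S}=\mathbb{C}[q,q^{-1}]$. The tied--boxed Hecke algebra $bH_n(q)$ is the $\mathbb{S}$--algebra presented by generators $e_1,\dots,e_{n-1}$, $z_1,\dots,z_{n-1}$ and relations: $e_i^2=e_i$, $e_ie_j=e_je_i$; $z_iz_jz_i=z_jz_iz_j$ if $|i-j|=1$, $z_iz_j=z_jz_i$ if $|i-j|>1$; $e_iz_i=z_i$; $e_iz_j=z_je_i$; $z_i^2=e_i+(q-q^{-1})z_i$. $\mathcal{LP}_n$ is the set of linear set partitions of $[n]$ (all blocks intervals), ordered by $\mathbf{I}\preceq\mathbf{J}$ iff every block of $\mathbf{J}$ is a union of blocks of $\mathbf{I}$. For $\mathbf{I}\in\mathcal{LP}_n$, $\operatorname{E}_\mathbf{I}=\prod e_i$ over those $i$ with $i,i+1$ in the same block of $\mathbf{I}$. Let $|\mathbf{I}|$ be the number of blocks, $\mu(\mathbf{I},\mathbf{J})=(-1)^{|\mathbf{I}|-|\mathbf{J}|}$ if $\mathbf{I}\preceq\mathbf{J}$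 and $0$ otherwise, and $\mathbb{E}_\mathbf{I}=\sum_{\mathbf{J}\in\mathcal{LP}_n,\ \mathbf{J}\succeq\mathbf{I}}\mu(\mathbf{I},\mathbf{J})\operatorname{E}_\mathbf{J}$. *)

From HB Require Import structures.
From mathcomp Require Import all_boot all_order all_algebra.
From mathcomp Require Import complex.
From mathcomp Require Import Rstruct.
Set Implicit Arguments. Unset Strict Implicit. Unset Printing Implicit Defensive.
Import Order.TTheory GRing.Theory Num.Theory.
Local Open Scope ring_scope.

Definition Cplx : fieldType := (Rdefinitions.R)[i].

(* Set partitions of [n] = {1..n}, represented on 'I_n = {0..n-1}
   (ordinal k stands for the element k+1 of [n]). *)
Definition is_interval n (B : {set 'I_n}) : bool :=
  [forall x in B, forall y in B, forall z : 'I_n,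
     ((x <= z) && (z <= y))%N ==> (z \in B)].

Definition linpart n (P : {set {set 'I_n}}) : bool :=
  partition P [set: 'I_n] && [forall B in P, is_interval B].

Definition lp_le n (I J : {set {set 'I_n}}) : bool :=
  [forall B in J, exists S : {set {set 'I_n}}, (S \subset I) && (B == cover S)].

(* x and y (natural numbers in 0..n-1, i.e. elements x+1, y+1 of [n])
   lie in the same block of P *)
Definition sameblock n (P : {set {set 'I_n}}) (x y : nat) : bool :=
  [exists B in P, [exists a in B, [exists b in B,
     (nat_of_ord a == x) && (nat_of_ord b == y)]]].

(* E_I = product of e_i over those i in 1..n-1 with i, i+1 in the same block
   (i.e. ordinals i-1, i in the same block). *)
Definition EE (A : pzRingType) n (e : nat -> A) (P : {set {set 'I_n}}) : A :=
  \prod_(i < n | (0 < i)%N && sameblock P i.-1 i) e i.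

(* blackboard E_I = sum over linear J ⪰ I of mu(I,J) E_J *)
Definition EEbb (A : pzRingType) n (e : nat -> A) (I : {set {set 'I_n}}) : A :=
  \sum_(J : {set {set 'I_n}} | linpart J && lp_le I J)
     (-1) ^+ (#|I| - #|J|) * EE e J.

From HB Require Import structures.
From mathcomp Require Import all_boot all_order all_algebra.
From mathcomp Require Import complex.
From mathcomp Require Import Rstruct.
From mathcomp Require Import zify.
Set Implicit Arguments. Unset Strict Implicit. Unset Printing Implicit Defensive.
Import Order.TTheory GRing.Theory Num.Theory.

(* A linear partition is determined by its links, the i such that i-1 and i
   lie in the same block, and every subset of the gaps {1, ..., n-1} occurs.
   Refinement becomes inclusion of link sets, E_I becomes the product of the
   e_i over the links of I, and |I| = n - #links.  Hence the blackboard E_I is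
   the Moebius inversion  sum_(S <= X <= D) (-1)^|X \ S| e_X  of a family of
   commuting idempotents over a Boolean lattice; everything follows from
   e_X e_U = e_(X \cup U) and the cancellation obtained by toggling a single
   element. *)

Section LinearPartitions.
Variable n : nat.
Implicit Types (P I J : {set {set 'I_n}}) (X : {set 'I_n}) (x y i : 'I_n).

Definition gaps : {set 'I_n} := [set i : 'I_n | 0 < i].

Definition links P : {set 'I_n} := [set i : 'I_n | (0 < i) && sameblock P i.-1 i].

Definition linked X : rel 'I_n :=
  fun x y => [forall k : 'I_n, (minn x y < k <= maxn x y) ==> (k \in X)].

Definition linpart_of X := equivalence_partition (linked X) [set: 'I_n].

Definition prev i : 'I_n := Ordinal (leq_ltn_trans (leq_pred i) (ltn_ord i)).

Lemma links_sub P : links P \subset gaps.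
Proof. by apply/subsetP=> i; rewrite !inE => /andP[]. Qed.

Lemma linked_sym X : symmetric (linked X).
Proof. by move=> x y; rewrite /linked minnC maxnC. Qed.

Lemma linked_refl X : reflexive (linked X).
Proof. by move=> x; apply/forallP=> k; apply/implyP; rewrite minnn maxnn; lia. Qed.

Lemma linked_trans X : transitive (linked X).
Proof.
move=> y x z /forallP xy /forallP yz; apply/forallP=> k; apply/implyP=> k_in.
have [kxy|kyz] : (minn x y < k <= maxn x y) \/ (minn y z < k <= maxn y z) by lia.
  exact: implyP (xy k) kxy.
exact: implyP (yz k) kyz.
Qed.

Lemma linked_sub X x y (a b : 'I_n) : linked X x y ->
  minn x y <= minn a b -> maxn a b <= maxn x y -> linked X a b.
Proof.
move=> /forallP xy le_min le_max; apply/forallP=> k; apply/implyP=> k_in.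
by apply: implyP (xy k) _; lia.
Qed.

Lemma linked_mono X (Y : {set 'I_n}) x y : X \subset Y -> linked X x y -> linked Y x y.
Proof.
move=> /subsetP XY /forallP xy; apply/forallP=> k; apply/implyP=> k_in.
exact/XY/(implyP (xy k)).
Qed.

Lemma linked_gap X i : 0 < i -> linked X (prev i) i = (i \in X).
Proof.
move=> i_gt0; apply/forallP/idP=> [/(_ i)/implyP|iX k]; first by apply; rewrite /=; lia.
by apply/implyP=> /= k_in; have -> : k = i by apply: ord_inj; lia.
Qed.

Section Partition.
Variable P : {set {set 'I_n}}.
Hypothesis partP : partition P [set: 'I_n].

Let coverP x : x \in cover P.
Proof. by case/and3P: partP => /eqP-> _ _; rewrite inE. Qed.

Let trivP : trivIset P.
Proof. by case/and3P: partP. Qed.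

Lemma pblockT x : pblock P x \in P.
Proof. exact: pblock_mem. Qed.

Lemma mem_pblockT x : x \in pblock P x.
Proof. by rewrite mem_pblock. Qed.

Lemma pblock_sym x y : (y \in pblock P x) = (x \in pblock P y).
Proof. by rewrite -!eq_pblock // eq_sym. Qed.

Lemma same_pblockT x y : y \in pblock P x -> pblock P y = pblock P x.
Proof. exact: same_pblock. Qed.

Lemma sameblockE x y : sameblock P x y = (y \in pblock P x).
Proof.
apply/existsP/idP=> [[B /andP[BP /existsP[a /andP[aB]]]]|yx].
  case/existsP=> b /andP[bB /andP[/eqP/ord_inj<- /eqP/ord_inj<-]].
  by rewrite (def_pblock trivP BP aB).
exists (pblock P x); rewrite pblockT; apply/existsP; exists x.
by rewrite mem_pblockT; apply/existsP; exists y; rewrite yx !eqxx.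
Qed.

Lemma mem_links i : (i \in links P) = (0 < i) && (i \in pblock P (prev i)).
Proof. by rewrite inE -sameblockE. Qed.

Lemma pblock_linked x y : linked (links P) x y -> y \in pblock P x.
Proof.
wlog le_xy : x y / x <= y.
  move=> W; case: (leqP x y) => [/W//|/ltnW lt_yx].
  by rewrite linked_sym pblock_sym; apply: W.
have [d dxy] : exists d, y - x = d by eexists.
elim: d y le_xy dxy => [|d IH] y le_xy dxy xy.
  by rewrite (_ : y = x) ?mem_pblockT //; apply: ord_inj; lia.
have lt_xy : x < y by lia.
have : y \in links P.
  by apply: implyP (forallP xy y) _; rewrite (minn_idPl le_xy) (maxn_idPr le_xy) lt_xy /=.
rewrite mem_links => /andP[y_gt0 y_prev].
have xprev : linked (links P) x (prev y) by apply: (linked_sub xy); rewrite /=; lia.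
by rewrite -(same_pblockT (IH (prev y) _ _ xprev)) //=; lia.
Qed.

End Partition.

Lemma linpart_partition P : linpart P -> partition P [set: 'I_n].
Proof. by case/andP. Qed.

Section Linear.
Variable P : {set {set 'I_n}}.
Hypothesis linP : linpart P.
Let partP := linpart_partition linP.

Lemma pblock_interval x y (z : 'I_n) : y \in pblock P x ->
  minn x y <= z <= maxn x y -> z \in pblock P x.
Proof.
move=> yx; have /forallP/(_ (pblock P x)) := (andP linP).2.
rewrite pblockT //= => /forallP intB.
have ends a b : a \in pblock P x -> b \in pblock P x -> a <= z <= b -> z \in pblock P x.
  move=> aB bB; move: (intB a); rewrite aB => /forallP/(_ b).
  by rewrite bB => /forallP/(_ z)/implyP.
by case: (leqP x y) => _; apply: ends; rewrite ?mem_pblockT.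
Qed.

Lemma pblock_linksE x y : (y \in pblock P x) = linked (links P) x y.
Proof.
apply/idP/idP; last exact: pblock_linked.
move=> yx; apply/forallP=> k; apply/implyP=> k_in.
have kx : k \in pblock P x by apply: pblock_interval yx _; lia.
have prevx : prev k \in pblock P x by apply: pblock_interval yx _; rewrite /=; lia.
by rewrite mem_links //= (same_pblockT partP prevx) kx andbT; lia.
Qed.

Lemma card_linpart : #|P| = n - #|links P|.
Proof.
have [_ trivP _] := and3P partP.
have eP : P = pblock P @: ~: links P.
  apply/setP=> B; apply/idP/imsetP=> [BP|[x _ ->]]; last exact: pblockT.
  have /set0Pn[x0 x0B] : B != set0 by apply: contraTneq BP => ->; case/and3P: partP.
  case: (arg_minnP (fun i : 'I_n => val i) x0B) => m mB m_min.
  exists m; last by rewrite (def_pblock trivP BP mB).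
  rewrite inE mem_links //; apply/negP=> /andP[m_gt0 m_prev].
  have : prev m \in B by rewrite -(def_pblock trivP BP mB) pblock_sym.
  by move/m_min; rewrite /=; lia.
rewrite {1}eP card_in_imset; first by have := cardsC (links P); rewrite card_ord; lia.
suff lt_inj x y : x < y -> y \notin links P -> pblock P x != pblock P y.
  move=> x y; rewrite !in_setC => xL yL; case: (ltngtP x y) => [lt|lt|/val_inj//].
    by move/eqP; rewrite (negbTE (lt_inj _ _ lt yL)).
  by move/esym/eqP; rewrite (negbTE (lt_inj _ _ lt xL)).
move=> lt_xy; apply: contra => /eqP eq_xy.
have : linked (links P) x y by rewrite -pblock_linksE eq_xy mem_pblockT.
move=> /forallP/(_ y)/implyP; apply.
by rewrite (minn_idPl (ltnW lt_xy)) (maxn_idPr (ltnW lt_xy)) lt_xy /=.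
Qed.

End Linear.

Lemma linked_equiv X : {in [set: 'I_n] & &, equivalence_rel (linked X)}.
Proof.
move=> x y z _ _ _; split; first exact: linked_refl.
by move=> xy; apply/idP/idP; apply: linked_trans; rewrite // linked_sym.
Qed.

Lemma linpart_of_partition X : partition (linpart_of X) [set: 'I_n].
Proof. exact: equivalence_partitionP (linked_equiv X). Qed.

Lemma pblock_linpart_of X x y : (y \in pblock (linpart_of X) x) = linked X x y.
Proof. by rewrite pblock_equivalence_partition ?inE //; apply: linked_equiv. Qed.

Lemma linpart_of_linpart X : linpart (linpart_of X).
Proof.
rewrite /linpart linpart_of_partition; apply/forallP=> B; apply/implyP=> /imsetP[x _ ->].
apply/forallP=> a; apply/implyP; rewrite inE => /andP[_ xa].
apply/forallP=> b; apply/implyP; rewrite inE => /andP[_ xb].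
apply/forallP=> c; apply/implyP=> le_acb; rewrite !inE /=.
have ab : linked X a b by apply: linked_trans xb; rewrite linked_sym.
by apply: (linked_trans xa); apply: (linked_sub ab); lia.
Qed.

Lemma links_linpart_of X : links (linpart_of X) = X :&: gaps.
Proof.
apply/setP=> i; rewrite mem_links ?linpart_of_partition // pblock_linpart_of !inE.
by case: (posnP i) => [|i_gt0]; rewrite ?andbF // andbT linked_gap.
Qed.

Lemma linpart_ofK P : linpart P -> linpart_of (links P) = P.
Proof.
move=> linP; rewrite -{2}(equivalence_partition_pblock (linpart_partition linP)).
by apply: eq_imset => x; apply/setP=> y; rewrite !inE pblock_linksE.
Qed.

Lemma links_inj : {in @linpart n &, injective links}.
Proof. by move=> I J linI linJ eqIJ; rewrite -(linpart_ofK linI) eqIJ linpart_ofK. Qed.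

Lemma lp_le_pblock I J : partition I [set: 'I_n] -> partition J [set: 'I_n] ->
  lp_le I J = [forall x, pblock I x \subset pblock J x].
Proof.
move=> partI partJ; have [_ trivI _] := and3P partI; have [_ trivJ _] := and3P partJ.
apply/forallP/forallP=> [IJ x | IJ B].
  have /existsP[S /andP[SI /eqP JxS]] := implyP (IJ (pblock J x)) (pblockT partJ x).
  have : x \in cover S by rewrite -JxS mem_pblockT.
  case/bigcupP=> C CS xC; rewrite JxS (def_pblock trivI (subsetP SI C CS) xC).
  exact: bigcup_sup.
apply/implyP=> BJ; apply/existsP; exists [set C in I | C \subset B].
apply/andP; split; first by apply/subsetP=> C; rewrite inE => /andP[].
apply/eqP/setP=> x; apply/idP/bigcupP=> [xB|[C]].
  exists (pblock I x); last exact: mem_pblockT.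
  by rewrite inE pblockT // -(def_pblock trivJ BJ xB) IJ.
by rewrite inE => /andP[_ /subsetP]; apply.
Qed.

Lemma lp_le_links I J : linpart I -> linpart J -> lp_le I J = (links I \subset links J).
Proof.
move=> linI linJ; have partI := linpart_partition linI; have partJ := linpart_partition linJ.
rewrite lp_le_pblock //; apply/forallP/subsetP=> [IJ i | IJ x].
  by rewrite !mem_links // => /andP[-> iI]; apply: subsetP (IJ _) _ iI.
by apply/subsetP=> y; rewrite !pblock_linksE //; apply: linked_mono; apply/subsetP.
Qed.

End LinearPartitions.

Local Open Scope ring_scope.

Section Toggle.
Variable T : finType.
Implicit Types (j : T) (X Y : {set T}).

Definition toggle j X := if j \in X then X :\ j else j |: X.

Lemma mem_toggle j X k : (k \in toggle j X) = (k == j) (+) (k \in X).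
Proof.
rewrite /toggle; case: (boolP (j \in X)) => jX; rewrite !inE;
  by case: eqVneq => [->|]; rewrite ?jX.
Qed.

Lemma toggleK j : involutive (toggle j).
Proof. by move=> X; apply/setP=> k; rewrite !mem_toggle addbA addbb. Qed.

Lemma toggle_subset j X Y : j \in Y -> (toggle j X \subset Y) = (X \subset Y).
Proof.
move=> jY; apply/subsetP/subsetP=> XY k; have [-> _ //|kj] := eqVneq k j;
  by move: (XY k); rewrite mem_toggle (negbTE kj).
Qed.

Lemma subset_toggle j X Y : j \notin Y -> (Y \subset toggle j X) = (Y \subset X).
Proof.
move=> jY; apply/subsetP/subsetP=> YX k kY; have kj : k != j by apply: contraNneq jY => <-.
  by move: (YX k kY); rewrite mem_toggle (negbTE kj).
by rewrite mem_toggle (negbTE kj) YX.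
Qed.

Lemma toggleU j X Y : j \in Y -> toggle j X :|: Y = X :|: Y.
Proof.
by move=> jY; apply/setP=> k; rewrite !inE mem_toggle; case: eqVneq => [->|]; rewrite ?jY ?orbT.
Qed.

Lemma toggleD j X Y : j \notin Y -> toggle j X :\: Y = toggle j (X :\: Y).
Proof.
move=> jY; apply/setP=> k; rewrite !(inE, mem_toggle).
by case: eqVneq => [->|]; rewrite ?(negbTE jY).
Qed.

Lemma setD_toggle j X Y : j \in X -> X :\: toggle j Y = toggle j (X :\: Y).
Proof.
move=> jX; apply/setP=> k; rewrite !(inE, mem_toggle).
by case: eqVneq => [->|]; rewrite ?jX //; case: (j \in Y).
Qed.

Lemma sign_toggle (R : pzRingType) j X : (-1) ^+ #|toggle j X| = - (-1) ^+ #|X| :> R.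
Proof.
rewrite /toggle; case: (boolP (j \in X)) => jX; last by rewrite cardsU1 jX exprS mulN1r.
by rewrite [in RHS](cardsD1 j X) jX exprS mulN1r opprK.
Qed.

Lemma sum_toggle_eq0 (V : zmodType) j (P : pred {set T}) (F : {set T} -> V) :
    (forall X, P (toggle j X) = P X) -> (forall X, P X -> F (toggle j X) = - F X) ->
  \sum_(X | P X) F X = 0.
Proof.
move=> Ptog Ftog; rewrite (bigID (fun X => j \in X)) /=.
rewrite (reindex_inj (inv_inj (toggleK j))) /=.
rewrite (eq_big (fun X => P X && (j \notin X)) (fun X => - F X)) ?sumrN ?addNr //.
  by move=> X; rewrite Ptog mem_toggle eqxx.
by move=> X; rewrite Ptog => /andP[PX _]; apply: Ftog.
Qed.

End Toggle.

Section MobiusIdempotents.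
Variables (I : finType) (R : pzRingType) (e : I -> R) (D : {set I}).
Hypothesis e_idem : {in D, forall i, e i * e i = e i}.
Hypothesis e_comm : {in D &, forall i j, GRing.comm (e i) (e j)}.
Implicit Types (S U X : {set I}).

Definition eprod X : R := \prod_(i in X) e i.

Definition mobius_eprod S : R :=
  \sum_(X : {set I} | (S \subset X) && (X \subset D)) (-1) ^+ #|X :\: S| * eprod X.

Lemma eprodU X U : X \subset D -> U \subset D -> eprod X * eprod U = eprod (X :|: U).
Proof.
move=> /subsetP XD /subsetP UD.
have mkcond Y : eprod Y = \prod_i (if i \in Y then e i else 1) by rewrite /eprod big_mkcond.
rewrite !mkcond -prodrM_comm.
  apply: eq_bigr => i _; rewrite inE.
  by case: ifP => iX; case: ifP => iU; rewrite /= ?mulr1 ?mul1r // e_idem ?XD.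
move=> i j _ _; case: ifP => iX; case: ifP => jU; rewrite /GRing.comm ?mulr1 ?mul1r //.
exact: e_comm (XD _ iX) (UD _ jU).
Qed.

Lemma commr_eprod x X : X \subset D -> {in D, forall i, GRing.comm x (e i)} ->
  GRing.comm x (eprod X).
Proof. by move=> /subsetP XD xe; apply: commr_prod => i /XD; apply: xe. Qed.

Lemma commr_mobius_eprod x S : {in D, forall i, GRing.comm x (e i)} ->
  GRing.comm x (mobius_eprod S).
Proof.
move=> xe; apply: commr_sum => X /andP[_ XD].
by apply: commrM; [apply: commr_sign | apply: commr_eprod].
Qed.

Lemma mobius_eprod_commr S S' : GRing.comm (mobius_eprod S) (mobius_eprod S').
Proof.
apply: commr_mobius_eprod => i iD; apply/commr_sym/commr_mobius_eprod => j jD.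
exact: e_comm.
Qed.

Lemma mobius_eprodE S U : S \subset D -> U \subset D ->
  mobius_eprod S * eprod U = if U \subset S then mobius_eprod S else 0.
Proof.
move=> SD UD; rewrite /mobius_eprod mulr_suml; case: ifP => US.
  apply: eq_bigr => X /andP[SX XD]; rewrite -mulrA eprodU //.
  by rewrite (setUidPl (subset_trans US SX)).
(* Toggling some j in U :\: S pairs off the terms with opposite signs. *)
have /subsetPn[j jU jS] := negbT US.
have jD : j \in D by apply: (subsetP UD).
apply: (@sum_toggle_eq0 _ _ j) => [X|X /andP[SX XD]].
  by rewrite subset_toggle // toggle_subset.
rewrite -!mulrA !eprodU ?toggle_subset // toggleU // toggleD //.
by rewrite sign_toggle mulNr.
Qed.

Lemma mulr_mobius_eprod S S' : S \subset D ->
  mobius_eprod S * mobius_eprod S' =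
  \sum_(X : {set I} | (S' \subset X) && (X \subset D))
     (-1) ^+ #|X :\: S'| * (if X \subset S then mobius_eprod S else 0).
Proof.
move=> SD; rewrite {2}/mobius_eprod mulr_sumr; apply: eq_bigr => X /andP[_ XD].
by rewrite mulrA commr_sign -mulrA mobius_eprodE.
Qed.

Lemma mobius_eprod_idem S : S \subset D -> mobius_eprod S * mobius_eprod S = mobius_eprod S.
Proof.
move=> SD; rewrite mulr_mobius_eprod // (bigD1 S) ?subxx //= setDv cards0 mul1r.
rewrite big1 ?addr0 // => X /andP[/andP[SX _] XS].
by rewrite ifN ?mulr0 //; apply: contra XS => XS; rewrite eqEsubset XS.
Qed.

Lemma mobius_eprod_orth S S' : S \subset D -> ~~ (S' \subset S) ->
  mobius_eprod S * mobius_eprod S' = 0.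
Proof.
move=> SD S'S; rewrite mulr_mobius_eprod // big1 // => X /andP[S'X _].
by rewrite ifN ?mulr0 //; apply: contra S'S; apply: subset_trans.
Qed.

Lemma mobius_eprodM S S' : S \subset D -> S' \subset D ->
  mobius_eprod S * mobius_eprod S' = if S == S' then mobius_eprod S else 0.
Proof.
move=> SD S'D; have [<-|neqSS'] := eqVneq; first exact: mobius_eprod_idem.
have [S'S|/(mobius_eprod_orth SD)//] := boolP (S' \subset S).
rewrite mobius_eprod_commr mobius_eprod_orth //.
by apply: contra neqSS' => SS'; rewrite eqEsubset SS'.
Qed.

Lemma sum_mobius_eprod : \sum_(S : {set I} | S \subset D) mobius_eprod S = 1.
Proof.
rewrite /mobius_eprod (exchange_big_dep (fun X => X \subset D)) /=;
  last by move=> ? ? _ /andP[].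
rewrite (bigD1 set0) ?sub0set //= (big_pred1 set0) => [|S]; last first.
  by rewrite /= subset0 andbC; case: eqP => // ->; rewrite sub0set.
rewrite setD0 cards0 mul1r /eprod big_set0 big1 ?addr0 // => X /andP[XD /set0Pn[j jX]].
rewrite -mulr_suml (@sum_toggle_eq0 _ _ j) ?mul0r // => [S|S _].
  by rewrite !toggle_subset // (subsetP XD).
by rewrite setD_toggle // sign_toggle.
Qed.

End MobiusIdempotents.

Lemma sum_linpart n (V : nmodType) (Q : pred {set 'I_n}) (F : {set 'I_n} -> V) :
  \sum_(P : {set {set 'I_n}} | linpart P && Q (links P)) F (links P) =
  \sum_(X : {set 'I_n} | (X \subset gaps n) && Q X) F X.
Proof.
rewrite (reindex_onto (@linpart_of n) (@links n)) => [|P /andP[linP _]];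
  last exact: linpart_ofK.
apply: eq_big => [X|X /andP[_ /eqP->]] //.
rewrite linpart_of_linpart links_linpart_of /=.
have [Xgaps|nXgaps] := boolP (X \subset gaps n); first by rewrite (setIidPl Xgaps) eqxx andbT.
apply/negbTE/nandP; right.
by apply: contra nXgaps => /eqP <-; apply: subsetIr.
Qed.

Lemma EE_eprod (A : pzRingType) n (e : nat -> A) (P : {set {set 'I_n}}) :
  EE e P = eprod (fun i : 'I_n => e i) (links P).
Proof. by apply: eq_bigl => i; rewrite inE. Qed.

Lemma EEbb_mobius (A : pzRingType) n (e : nat -> A) (I : {set {set 'I_n}}) : linpart I ->
  EEbb e I = mobius_eprod (fun i : 'I_n => e i) (gaps n) (links I).
Proof.
move=> linI; rewrite /EEbb.
rewrite (eq_big (fun J => linpart J && (links I \subset links J))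
  (fun J => (-1) ^+ #|links J :\: links I| * eprod (fun i : 'I_n => e i) (links J)))
  => [|J|J /andP[linJ IJ]].
- rewrite (sum_linpart (fun X => links I \subset X)
    (fun X => (-1) ^+ #|X :\: links I| * eprod (fun i : 'I_n => e i) X)).
  by apply: eq_bigl => X; rewrite andbC.
- by case linJ: (linpart J); rewrite // lp_le_links.
rewrite EE_eprod lp_le_links // in IJ *; congr (_ ^+ _ * _).
have := subset_leq_card IJ; have := max_card (links J); rewrite card_ord.
by rewrite !card_linpart // cardsD (setIidPr IJ); lia.
Qed.

Theorem proposition5p8 (n : nat) (A : algType Cplx) (q qi : A)
  (e z : nat -> A)
  (Hqi : q * qi = 1 /\ qi * q = 1)
  (Hqc : forall x : A, q * x = x * q)
  (He2 : forall i, (0 < i < n)%N -> e i * e i = e i)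
  (Hee : forall i j, (0 < i < n)%N -> (0 < j < n)%N -> e i * e j = e j * e i)
  (Hbr : forall i j, (0 < i < n)%N -> (0 < j < n)%N ->
           (i == j.+1)%N || (j == i.+1)%N -> z i * z j * z i = z j * z i * z j)
  (Hzc : forall i j, (0 < i < n)%N -> (0 < j < n)%N ->
           (i.+1 < j)%N || (j.+1 < i)%N -> z i * z j = z j * z i)
  (Hez : forall i, (0 < i < n)%N -> e i * z i = z i)
  (Hezc : forall i j, (0 < i < n)%N -> (0 < j < n)%N -> e i * z j = z j * e i)
  (Hquad : forall i, (0 < i < n)%N -> z i * z i = e i + (q - qi) * z i) :
  (* (1) complete set of central pairwise orthogonal idempotents *)
  ((forall I : {set {set 'I_n}}, linpart I -> EEbb e I * EEbb e I = EEbb e I)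
   /\ (forall I J : {set {set 'I_n}}, linpart I -> linpart J -> I != J ->
         EEbb e I * EEbb e J = 0)
   /\ (forall I : {set {set 'I_n}}, linpart I -> forall i, (0 < i < n)%N ->
         EEbb e I * e i = e i * EEbb e I /\ EEbb e I * z i = z i * EEbb e I)
   /\ \sum_(I : {set {set 'I_n}} | linpart I) EEbb e I = 1)
  /\
  (* (2) *)
  (forall I J : {set {set 'I_n}}, linpart I -> linpart J ->
     EEbb e I * EE e J = (if lp_le J I then EEbb e I else 0)).
Proof.
have gapsP (i : 'I_n) : i \in gaps n -> (0 < i < n)%N by rewrite inE ltn_ord andbT.
pose e' (i : 'I_n) := e i.
have e_idem : {in gaps n, forall i, e' i * e' i = e' i} by move=> i /gapsP; apply: He2.
have e_comm : {in gaps n &, forall i j, GRing.comm (e' i) (e' j)}.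
  by move=> i j /gapsP iP /gapsP jP; apply: Hee.
have mobiusM := mobius_eprodM e_idem e_comm (links_sub _) (links_sub _).
split; [split; [|split; [|split]] |] => [I linI|I J linI linJ neqIJ|I linI i iP|
  |I J linI linJ].
- by rewrite EEbb_mobius // mobiusM eqxx.
- by rewrite !EEbb_mobius // mobiusM (inj_in_eq (@links_inj n)) // (negbTE neqIJ).
- rewrite EEbb_mobius //; split; apply/esym/commr_mobius_eprod => j /gapsP jP.
    exact: Hee.
  exact/esym/Hezc.
- rewrite -(sum_mobius_eprod e' (gaps n)).
  rewrite (eq_bigl (fun X : {set 'I_n} => (X \subset gaps n) && predT X)) => [|X];
    last by rewrite andbT.
  rewrite -(sum_linpart predT (mobius_eprod e' (gaps n))).
  by apply: eq_big => [I|I linI]; [rewrite andbT | apply: EEbb_mobius].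
- by rewrite EEbb_mobius // EE_eprod (mobius_eprodE e_idem e_comm) ?links_sub // lp_le_links.
Qed.
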